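(* Let $Q$ be a finite set with $|Q|\ge 2$, and let $\mathrm{sel}(Q)$ be the smallest cardinality of a selective family for $Q$. If $m$ is the least positive integer such that $|Q|\le\binom{m}{\lfloor m/2\rfloor}$, then $\mathrm{sel}(Q)=m$.
   Context: A family $\mathscr{S}=\{S_i:i\in I\}$ of distinct nonempty subsets of $Q$ is selective for $Q$ if for every $q\in Q$ there is a nonempty $I(q)\subseteq I$ with $\{q\}=\bigcap_{i\in I(q)}S_i$. (The family of all singletons $\{q\}$, $q\in Q$, is always selective, so $\mathrm{sel}(Q)$ is well defined.) *)

From mathcomp Require Import all_boot.
Set Implicit Arguments. Unset Strict Implicit. Unset Printing Implicit Defensive.

(* The finite set Q is modelled as a finite type T; a family of distinct
   subsets of Q is a set F : {set {set T}} (distinctness is automatic). *)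

Definition selective (T : finType) (F : {set {set T}}) : bool :=
  (set0 \notin F) &&
  [forall q : T, exists I : {set {set T}},
     [&& I \subset F, I != set0 & \bigcap_(S in I) S == [set q]]].

Lemma singletons_selective (T : finType) :
  selective [set [set q] | q : T].
Proof.
apply/andP; split.
  apply/imsetP => -[q _ /esym/eqP]; apply/negP.
  by apply/set0Pn; exists q; rewrite set11.
apply/forallP => q; apply/existsP; exists [set [set q]].
apply/and3P; split.
- by rewrite sub1set; apply/imsetP; exists q.
- by apply/set0Pn; exists [set q]; rewrite set11.
- by rewrite big_set1.
Qed.

Lemma exists_selective_card (T : finType) :
  exists n, [exists F : {set {set T}}, selective F && (#|F| == n)].
Proof.
exists #|[set [set q] | q : T]|; apply/existsP.
by exists [set [set q] | q : T]; rewrite singletons_selective eqxx.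
Qed.

Definition sel (T : finType) : nat := ex_minn (exists_selective_card T).

From mathcomp Require Import all_boot zify.
Set Implicit Arguments. Unset Strict Implicit. Unset Printing Implicit Defensive.

(* A selective family F injects T into an antichain of subsets of F, via
   q |-> {S in F | q \in S}: if every member of F containing q contains q',
   then q' lies in the intersection selecting q, so q' = q.  By Sperner's
   theorem, #|T| <= 'C(#|F|, #|F|./2).  Conversely, code the points of T
   injectively by m./2-subsets B q of {0, ..., m-1}; the m sets
   S_i = {q | i \in B q} form a selective family, since the S_i with
   i \in B q intersect in {q' | B q \subset B q'} = {q}. *)

Lemma leq_bin_succ n k : k < n - k -> 'C(n, k) <= 'C(n, k.+1).
Proof.
move=> lt_k_nk; rewrite -(leq_pmul2l (ltn0Sn k)) mul_bin_left.
exact: leq_mul.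
Qed.

Lemma leq_bin2r_half n i j : i <= j -> j <= n./2 -> 'C(n, i) <= 'C(n, j).
Proof.
move=> le_ij; rewrite -(subnKC le_ij); elim: (j - i) => [|d IHd] le_jd.
  by rewrite addn0.
apply: leq_trans (IHd _) _; first lia.
by rewrite addnS; apply: leq_bin_succ; lia.
Qed.

Lemma leq_bin_half n k : 'C(n, k) <= 'C(n, n./2).
Proof.
have [lt_nk | le_kn] := ltnP n k; first by rewrite bin_small.
have [le_k | lt_k] := leqP k n./2; first exact: leq_bin2r_half.
by rewrite -bin_sub //; apply: leq_bin2r_half; lia.
Qed.

Lemma fact_half_leq n k : k <= n -> (n./2)`! * (n - n./2)`! <= k`! * (n - k)`!.
Proof.
move=> le_kn; have le_half : n./2 <= n by lia.
have pos : 0 < 'C(n, n./2) by rewrite bin_gt0.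
rewrite -(leq_pmul2l pos) bin_fact // -(bin_fact le_kn).
exact: leq_mul (leq_bin_half n k) _.
Qed.

Definition antichain (U : finType) (G : {set {set U}}) :=
  {in G &, forall A B : {set U}, A \subset B -> A = B}.

Section Sperner.

Variable U : finType.
Implicit Types (A D : {set U}) (G : {set {set U}}).

(* #|A|`! * (#|D| - #|A|)`! counts the maximal chains of subsets of D through
   A; for A proper, split them according to the element added right after A. *)
Lemma fact_card_proper A D : A \proper D ->
  #|A|`! * (#|D| - #|A|)`! = \sum_(x in D :\: A) #|A|`! * (#|D|.-1 - #|A|)`!.
Proof.
move=> ltAD; have lt_card := proper_card ltAD.
rewrite sum_nat_const cardsD (setIidPr (proper_sub ltAD)).
have -> : #|D| - #|A| = (#|D|.-1 - #|A|).+1 by lia.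
by rewrite factS mulnCA mulnC.
Qed.

Lemma lym D G : G \subset powerset D -> antichain G ->
  \sum_(A in G) #|A|`! * (#|D| - #|A|)`! <= #|D|`!.
Proof.
have [n] := ubnP #|D|; elim: n D G => // n IHn D G lt_Dn sGD antiG.
have subD A : A \in G -> A \subset D by move/(subsetP sGD); rewrite powersetE.
have [GD | notGD] := boolP (D \in G).
  have -> : G = [set D].
    apply/setP => A; rewrite in_set1; apply/idP/eqP => [GA | ->] //.
    exact: antiG (subD A GA).
  by rewrite big_set1 subnn muln1.
have properD A : A \in G -> A \proper D.
  by move=> GA; rewrite properEneq subD // andbT; apply: contraNneq notGD => <-.
rewrite (eq_bigr _ (fun A GA => fact_card_proper (properD A GA))).
rewrite (exchange_big_dep (mem D)) /=; last first.
  by move=> A x _; rewrite inE => /andP[].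
apply: (@leq_trans (\sum_(x in D) #|D|.-1`!)); last first.
  by rewrite sum_nat_const; case: #|D| => // d; rewrite factS.
apply: leq_sum => x Dx.
have card_Dx : #|D :\ x| = #|D|.-1 by rewrite (cardsD1 x D) Dx.
rewrite -card_Dx.
have <- : \sum_(A in [set A in G | x \notin A]) #|A|`! * (#|D :\ x| - #|A|)`! =
          \sum_(A | (A \in G) && (x \in D :\: A)) #|A|`! * (#|D :\ x| - #|A|)`!.
  by apply: eq_bigl => A; rewrite !inE Dx andbT.
apply: IHn.
- by move: lt_Dn; rewrite (cardsD1 x D) Dx.
- apply/subsetP => A; rewrite !inE => /andP[GA xA].
  apply/subsetP => y Ay; rewrite !inE (subsetP (subD A GA)) // andbT.
  by apply: contraNneq xA => <-.
- by move=> A B; rewrite !inE => /andP[GA _] /andP[GB _]; exact: antiG.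
Qed.

Theorem sperner D G : G \subset powerset D -> antichain G ->
  #|G| <= 'C(#|D|, #|D|./2).
Proof.
move=> sGD antiG; set d := #|D|.
have pos : 0 < (d./2)`! * (d - d./2)`! by rewrite muln_gt0 !fact_gt0.
rewrite -(leq_pmul2r pos) bin_fact; last by lia.
apply: leq_trans (lym sGD antiG).
rewrite -sum1_card big_distrl /=; apply: leq_sum => A GA.
rewrite mul1n fact_half_leq // subset_leq_card //.
by move/(subsetP sGD): GA; rewrite powersetE.
Qed.

End Sperner.

Section Selective.

Variable T : finType.
Implicit Types (F : {set {set T}}) (q : T).

Definition trace F q : {set {set T}} := [set S in F | q \in S].

Lemma selective_trace_anti F q q' :
  selective F -> trace F q \subset trace F q' -> q = q'.
Proof.
case/andP=> _ /forallP/(_ q)/existsP[I /and3P[sIF _ /eqP capI]] s_qq'.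
have : q' \in \bigcap_(S in I) S.
  apply/bigcapP => S IS; have qS : q \in S.
    by move: (set11 q); rewrite -capI => /bigcapP; apply.
  have : S \in trace F q by rewrite inE (subsetP sIF).
  by move/(subsetP s_qq'); rewrite inE => /andP[].
by rewrite capI in_set1 => /eqP.
Qed.

Lemma selective_card_leq_bin F : selective F -> #|T| <= 'C(#|F|, #|F|./2).
Proof.
move=> selF; have anti := selective_trace_anti selF.
have inj_trace : injective (trace F).
  by move=> q q' eq_tr; apply: anti; rewrite eq_tr.
rewrite -(card_imset _ inj_trace); apply: sperner.
  apply/subsetP => _ /imsetP[q _ ->]; rewrite powersetE.
  by apply/subsetP => S; rewrite inE => /andP[].
by move=> _ _ /imsetP[q _ ->] /imsetP[q' _ ->] /anti ->.
Qed.

Definition code_family (I : finType) (B : T -> {set I}) : {set {set T}} :=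
  [set [set q | i \in B q] | i : I] :\ set0.

Lemma card_code_family (I : finType) (B : T -> {set I}) :
  #|code_family B| <= #|I|.
Proof.
exact: leq_trans (subset_leq_card (subsetDl _ _)) (leq_imset_card _ _).
Qed.

Lemma selective_code_family (I : finType) (B : T -> {set I}) :
  (forall q, B q != set0) -> (forall q q', B q \subset B q' -> q = q') ->
  selective (code_family B).
Proof.
move=> B_neq0 antiB; apply/andP; split; first by rewrite !inE eqxx.
apply/forallP => q; apply/existsP; exists [set [set p | i \in B p] | i in B q].
apply/and3P; split.
- apply/subsetP => _ /imsetP[i Bqi ->]; rewrite !inE imset_f // andbT.
  by apply/set0Pn; exists q; rewrite inE.
- have /set0Pn[i Bqi] := B_neq0 q.
  by apply/set0Pn; exists [set p | i \in B p]; exact: imset_f.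
apply/eqP/setP => q'; rewrite in_set1.
apply/bigcapP/eqP => [cap_q' | ->]; last first.
  by move=> _ /imsetP[i Bqi ->]; rewrite inE.
apply/esym/antiB/subsetP => i Bqi.
by have := cap_q' _ (imset_f _ Bqi); rewrite inE.
Qed.

Lemma exists_uniform_code (I : finType) k : #|T| <= 'C(#|I|, k) ->
  exists2 B : T -> {set I}, injective B & forall q, #|B q| = k.
Proof.
rewrite -card_draws => le_T.
exists (fun q => enum_val (widen_ord le_T (enum_rank q))).
  move=> q q' /enum_val_inj/(congr1 val) eq_rank.
  exact/enum_rank_inj/val_inj.
move=> q; have := enum_valP (widen_ord le_T (enum_rank q)).
by rewrite inE => /eqP.
Qed.

Lemma exists_selective_card_leq m k : 0 < k -> #|T| <= 'C(m, k) ->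
  exists2 F : {set {set T}}, selective F & #|F| <= m.
Proof.
rewrite -{1}[m]card_ord => k_gt0 /exists_uniform_code[B injB card_B].
exists (code_family B); last by rewrite -{2}[m]card_ord card_code_family.
apply: selective_code_family => [q | q q' sBqq'].
  by rewrite -card_gt0 card_B.
by apply: injB; apply/eqP; rewrite eqEcard sBqq' !card_B /=.
Qed.

Lemma sel_leq F : selective F -> sel T <= #|F|.
Proof.
move=> selF; rewrite /sel; case: ex_minnP => n _; apply.
by apply/existsP; exists F; rewrite selF eqxx.
Qed.

Lemma sel_attained : exists2 F : {set {set T}}, selective F & #|F| = sel T.
Proof.
rewrite /sel; case: ex_minnP => n /existsP[F /andP[selF /eqP card_F]] _.
by exists F.
Qed.

End Selective.

Theorem mainTheorem8 (T : finType) (m : nat) :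
  1 < #|T| ->
  0 < m -> #|T| <= 'C(m, m./2) ->
  (forall k : nat, 0 < k -> #|T| <= 'C(k, k./2) -> m <= k) ->
  sel T = m.
Proof.
move=> gt1_T m_gt0 le_Tm min_m; apply/eqP; rewrite eqn_leq; apply/andP; split.
  have m_gt1 : 1 < m.
    rewrite ltn_neqAle m_gt0 andbT eq_sym; apply: contraTneq gt1_T => m1.
    by move: le_Tm; rewrite m1 leqNgt.
  have half_gt0 : 0 < m./2 by lia.
  have [F selF le_Fm] := exists_selective_card_leq half_gt0 le_Tm.
  exact: leq_trans (sel_leq selF) le_Fm.
have [F selF <-] := sel_attained T; have le_TF := selective_card_leq_bin selF.
apply: min_m (le_TF); rewrite lt0n; apply: contraTneq gt1_T => card_F.
by rewrite -leqNgt; move: le_TF; rewrite card_F.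
Qed.
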